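(* Let $q$ be a prime power and let $\mathbb{F}_q$ denote the field with $q$ elements. There exist $\epsilon > 0$ and a constant $c_q < q$ such that the following holds: for every $\delta > 0$, for all sufficiently large $n$, for every set $A \subset \mathbb{F}_q^n$ with $|A| > c_q^n$ and every tuple $\mathbf{a} = (a,b,c) \in (\mathbb{F}_q\setminus\{0\})^3$ with $a+b+c=0$, we have \[ |A_{\mathbf{a}}^{\epsilon}| \ge (1-\delta)|A|, \] where \[ A_{\mathbf{a}}^{\epsilon} = \{x \in A \,:\, \text{there exist at least } |A|^{\epsilon} \text{ pairs } (y,z) \in A^2 \text{ with } ax+by+cz=0\}. \] Equivalently: there exists $\epsilon>0$ such that for every $\delta>0$, every $(\epsilon,\delta)$-cap set $A\subset \mathbb{F}_q^n$ satisfies $|A| \le c_q^n$ for sufficiently large $n$.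
   Context: For $\epsilon,\delta>0$ and a tuple $(a,b,c)\in(\mathbb{F}_q\setminus\{0\})^3$ with $a+b+c=0$, a set $A\subset\mathbb{F}_q^n$ is called an $(\epsilon,\delta)$-cap set (for the tuple $(a,b,c)$) if there exists $A'\subset A$ with $|A'|>\delta|A|$ such that for every $x\in A'$ the number of pairs $(y,z)\in A^2$ with $ax+by+cz=0$ is less than $|A|^{\epsilon}$. *)

From HB Require Import structures.
From Stdlib Require Import Reals.
From mathcomp Require Import all_boot all_order all_algebra all_field.
Set Implicit Arguments. Unset Strict Implicit. Unset Printing Implicit Defensive.
Import GRing.Theory.

Definition nsol (F : finFieldType) (n : nat) (A : {set 'rV[F]_n})
  (a b c : F) (x : 'rV[F]_n) : nat :=
  #|[set p : 'rV[F]_n * 'rV[F]_n |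
      [&& p.1 \in A, p.2 \in A & (a *: x + b *: p.1 + c *: p.2 == 0)%R]]|.

Definition Aeps (F : finFieldType) (n : nat) (A : {set 'rV[F]_n})
  (a b c : F) (eps : R) : {set 'rV[F]_n} :=
  [set x in A | if Rle_dec (Rpower (INR #|A|) eps) (INR (nsol A a b c x)) then true else false].

Definition admissible (F : finFieldType) (a b c : F) : bool :=
  [&& a != 0%R, b != 0%R, c != 0%R & (a + b + c == 0)%R].

(* The proof sparsifies A and then applies the slice-rank bound for sets with
   only trivial solutions.  Let B be the set of x in A with fewer than
   L = |A|^eps solutions (y, z).  Joining x to the first coordinates of its
   solutions gives a digraph on B of out-degree < L, so a greedy choice yields
   I in B with |B| <= (2L + 1) |I| on which a x + b y + c z = 0 forces
   x = y = z.  Over F_q the indicator of a s + b t + c u = 0 is the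
   polynomial 1 - (a s + b t + c u)^(q-1); expanding it coordinatewise and
   sorting monomials by which of x, y, z has degree <= n(q-1)/3 writes the
   diagonal tensor on I with 3 |K_n| slices, so |I| <= 3 |K_n| (Tao's slice
   rank lemma).  Weighting exponent vectors by tau^degree with
   tau = 1 - 1/(9(q-1)) gives |K_n| <= G^n for some G < q.  Hence
   |B| <= 9 |A|^eps G^n, which is below delta |A| as soon as |A| > c^n, for
   c strictly between G and q, eps small and n large. *)

From Stdlib Require Import Reals.
From Stdlib Require Lra.
From mathcomp Require Import all_boot all_order all_algebra all_field.
From mathcomp Require Import ring lra zify.
From mathcomp Require Import Rstruct.
Set Implicit Arguments. Unset Strict Implicit. Unset Printing Implicit Defensive.
Import Order.TTheory GRing.Theory Num.Theory.

Section SliceRank.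
Variable F : fieldType.
Local Open Scope ring_scope.

Lemma mxrank_mxsub m n m' n' (f : 'I_m' -> 'I_m) (g : 'I_n' -> 'I_n)
    (A : 'M[F]_(m, n)) :
  (\rank (mxsub f g A) <= \rank A)%N.
Proof.
have -> : mxsub f g A = rowsub f 1%:M *m (A *m colsub g 1%:M).
  by rewrite mulmx_colsub mulmx1 -rowsubE; apply/matrixP => i j; rewrite !mxE.
exact: leq_trans (mxrankM_maxr _ _) (mxrankM_maxl _ _).
Qed.

Lemma mxrank_sum_le_card (I : finType) (P : {pred I}) m n (A : I -> 'M[F]_(m, n)) :
  (forall i, \rank (A i) <= 1)%N -> (\rank (\sum_(i in P) A i)%R <= #|P|)%N.
Proof.
move=> rankA1; rewrite -sum1_card.
elim/big_ind2: _ => [|B1 n1 B2 n2 le1 le2|i _]; first by rewrite mxrank0.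
  exact: leq_trans (mxrank_add _ _) (leq_add le1 le2).
exact: rankA1.
Qed.

Lemma rowspace_vector_ones m n (W : 'M[F]_(m, n)) :
  exists2 f : 'I_(\rank W) -> 'I_n, injective f &
    exists2 h : 'rV_n, (h <= W)%MS & forall t, h 0 (f t) = 1.
Proof.
pose B := row_base W.
have fullBt : row_full B^T by rewrite /row_full mxrank_tr eq_row_base.
pose f := fullrankfun fullBt.
exists f; first exact: fullrankfun_inj.
have unitBf : (rowsub f B^T)^T \in unitmx by rewrite unitmx_tr fullrowsub_unit.
exists (const_mx 1 *m invmx (rowsub f B^T)^T *m B).
  by rewrite (submx_trans (submxMl _ _)) ?eq_row_base.
have colsubB : colsub f B = (rowsub f B^T)^T by apply/matrixP => i j; rewrite !mxE.
move=> t; have /rowP/(_ t) := mulmxKV unitBf (const_mx 1 : 'rV_(\rank W)).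
by rewrite -colsubB mulmx_colsub !mxE.
Qed.

(* Tao's argument: contracting the third index with a vector h orthogonal to
   every u3 p, and equal to 1 on s - |K3| coordinates, leaves diag h, of rank
   at least s - |K3|, written as a sum of |K1| + |K2| rank-one matrices. *)
Lemma diagonal_slice_rank s (I : finType) (K1 K2 K3 : {pred I})
    (u1 u2 u3 : I -> 'I_s -> F) (g1 g2 g3 : I -> 'I_s -> 'I_s -> F) :
  (forall i j k, ((i == j) && (j == k))%:R =
     \sum_(p in K1) u1 p i * g1 p j k + \sum_(p in K2) u2 p j * g2 p i k
     + \sum_(p in K3) u3 p k * g3 p i j) ->
  (s <= #|K1| + #|K2| + #|K3|)%N.
Proof.
move=> diag_dec.
pose Z := \matrix_(k < s, t < #|K3|) u3 (enum_val t) k.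
have [f f_inj [h /sub_kermxP hZ h1]] := rowspace_vector_ones (kermx Z).
have h_orth p : p \in K3 -> \sum_k h 0 k * u3 p k = 0.
  move=> K3p; move/rowP: hZ => /(_ (enum_rank_in K3p p)).
  rewrite !mxE => hZp; rewrite -{}[in RHS]hZp; apply: eq_bigr => k _.
  by rewrite /Z mxE enum_rankK_in.
have contract i j : diag_mx h i j = \sum_k ((i == j) && (j == k))%:R * h 0 k.
  rewrite mxE (bigD1 j) //= eqxx andbT big1 => [|k /negPf jk]; last first.
    by rewrite [j == k]eq_sym jk andbF mul0r.
  by rewrite addr0 mulr_natl; case: eqP => [->|].
have rank_lower : (s - \rank Z <= \rank (diag_mx h))%N.
  have sub_diag : mxsub f f (diag_mx h) = 1%:M.
    by apply/matrixP => i j; rewrite !mxE (inj_eq f_inj) h1.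
  by rewrite -mxrank_ker -(mxrank1 F (\rank (kermx Z))) -sub_diag mxrank_mxsub.
have diag_h_dec : diag_mx h =
    (\sum_(p in K1) (\col_i u1 p i) *m (\row_j \sum_k g1 p j k * h 0 k)
     + \sum_(p in K2) (\col_i \sum_k g2 p i k * h 0 k) *m (\row_j u2 p j))%R.
  apply/matrixP => i j; rewrite contract !mxE !summxE.
  under eq_bigr => k _ do rewrite diag_dec !mulrDl !mulr_suml.
  have vanish : \sum_k \sum_(p in K3) u3 p k * g3 p i j * h 0 k = 0.
    rewrite exchange_big big1 // => p K3p.
    transitivity (g3 p i j * \sum_k h 0 k * u3 p k); last by rewrite h_orth ?mulr0.
    by rewrite mulr_sumr; apply: eq_bigr => k _; ring.
  rewrite !big_split /= vanish addr0 exchange_big [X in _ + X]exchange_big /=.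
  by congr (_ + _); apply: eq_bigr => p _;
    rewrite !mxE big_ord1 !mxE ?mulr_sumr ?mulr_suml; apply: eq_bigr => k _; ring.
have rank_upper : (\rank (diag_mx h) <= #|K1| + #|K2|)%N.
  rewrite diag_h_dec; apply: leq_trans (mxrank_add _ _) (leq_add _ _);
  by apply: mxrank_sum_le_card => p; apply: leq_trans (mxrankM_maxl _ _) (rank_leq_col _).
have := rank_leq_col Z; have := leq_trans rank_lower rank_upper; lia.
Qed.
End SliceRank.

Lemma card_sep_sum (T : finType) (V : {set T}) (P : pred T) :
  #|[set w in V | P w]| = \sum_(w in V) P w.
Proof.
rewrite -sum1_card big_mkcond [RHS]big_mkcond; apply: eq_bigr => w _.
by rewrite !inE; case: (w \in V); case: (P w).
Qed.

Section IndependentSet.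
Variables (T : finType) (N : T -> {set T}) (d : nat).

Definition adjacent v w := (w \in N v) || (v \in N w).

Lemma exists_low_degree_vertex (V : {set T}) : V != set0 ->
  (forall x, x \in V -> #|[set w in V | w \in N x]| <= d) ->
  exists2 v, v \in V & #|[set w in V | adjacent v w]| <= 2 * d.
Proof.
move=> V_nz out_deg; apply/exists_inP; apply: contraLR V_nz => /exists_inPn big_deg.
have out_sum : \sum_(v in V) \sum_(w in V) (w \in N v : nat) <= #|V| * d.
  rewrite -sum_nat_const; apply: leq_sum => v Vv; rewrite -card_sep_sum.
  exact: out_deg.
have in_sum : \sum_(v in V) \sum_(w in V) (v \in N w : nat) <= #|V| * d.
  by rewrite exchange_big.
have deg_sum : #|V| * (2 * d).+1 <= \sum_(v in V) \sum_(w in V) (adjacent v w : nat).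
  rewrite -sum_nat_const; apply: leq_sum => v Vv; rewrite -card_sep_sum ltnNge.
  exact: big_deg.
have adj_sum : \sum_(v in V) \sum_(w in V) (adjacent v w : nat) <=
    \sum_(v in V) \sum_(w in V) (w \in N v : nat) +
    \sum_(v in V) \sum_(w in V) (v \in N w : nat).
  rewrite -big_split; apply: leq_sum => v _; rewrite -big_split; apply: leq_sum => w _.
  by rewrite /adjacent; case: (w \in N v); case: (v \in N w).
rewrite -cards_eq0; lia.
Qed.

Lemma independent_subset (V : {set T}) :
  (forall x, x \in V -> #|[set w in V | w \in N x]| <= d) ->
  exists2 I : {set T}, I \subset V &
    {in I &, forall x y, y \in N x -> y = x} /\ #|V| <= (2 * d).+1 * #|I|.
Proof.
elim: {V}_.+1 {-2}V (ltnSn #|V|) => // k IH V ltVk out_deg.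
have [->|V_nz] := eqVneq V set0.
  by exists set0; rewrite ?sub0set ?cards0 //; split=> // x y; rewrite inE.
have [v Vv deg_v] := exists_low_degree_vertex V_nz out_deg.
pose V' := [set w in V | (w != v) && ~~ adjacent v w].
have V'V : V' \subset V by apply/subsetP => w; rewrite inE => /andP[].
have card_V : #|V| <= #|V'| + (2 * d).+1.
  have cover_V : V \subset V' :|: [set w in V | adjacent v w] :|: [set v].
    by apply/subsetP => w Vw; rewrite !inE Vw; case: eqP; case: adjacent.
  apply: leq_trans (subset_leq_card cover_V) _; rewrite -addn1 addnA.
  apply: leq_trans (leq_card_setU _ _) _; rewrite cards1 leq_add2r.
  by apply: leq_trans (leq_card_setU _ _) _; rewrite leq_add2l.
have ltV'k : #|V'| < k.
  suff : #|V'| < #|V| by lia.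
  apply: proper_card; rewrite properEneq V'V andbT.
  by apply: (contraTneq _ Vv) => <-; rewrite inE eqxx andbF.
have out_deg' x : x \in V' -> #|[set w in V' | w \in N x]| <= d.
  move=> V'x; apply: leq_trans (out_deg x (subsetP V'V x V'x)).
  by apply/subset_leq_card/subsetP => w; rewrite !inE => /andP[/andP[-> _] ->].
have [I I_V' [I_indep card_V']] := IH V' ltV'k out_deg'.
have vI : v \notin I by apply: contraNN (subsetP I_V' v) _; rewrite inE eqxx andbF.
exists (v |: I); first by rewrite subUset sub1set Vv (subset_trans I_V' V'V).
split; last by rewrite cardsU1 vI; lia.
have far_v w : w \in I -> ~~ adjacent v w.
  by move=> /(subsetP I_V'); rewrite inE => /and3P[].
move=> x y /setU1P[->|Ix] /setU1P[->|Iy] //.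
- by move=> Nvy; have := far_v y Iy; rewrite /adjacent Nvy.
- by move=> Nxv; have := far_v x Ix; rewrite /adjacent Nxv orbT.
exact: I_indep.
Qed.
End IndependentSet.

Lemma sum_option (R : nmodType) (J : finType) (G : option J -> R) :
  (\sum_(o : option J) G o = G None + \sum_(j : J) G (Some j))%R.
Proof.
rewrite (bigD1 None) //= (reindex_omap Some id) //; last by case.
by congr (_ + _)%R; apply: eq_bigl => j /=; rewrite eqxx.
Qed.

Section LinearFormPower.
Variables (R : comPzRingType) (a b c : R) (m : nat).
Local Open Scope ring_scope.

(* None indexes the constant 1 and Some (i, j) the term of exponents
   (m - i - j, j, i) of the double binomial expansion; the weight vanishes
   for j > m - i, and minn keeps the degree bound valid there. *)
Let J := option ('I_m.+1 * 'I_m.+1).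

Let weight (o : J) : R :=
  if o is Some (i, j) then
    if (j <= m - i)%N then
      - (a ^+ (m - i - j) * b ^+ j * c ^+ i *+ ('C(m, i) * 'C(m - i, j)))
    else 0
  else 1.
Let deg1 (o : J) : nat := if o is Some (i, j) then m - i - j else 0.
Let deg2 (o : J) : nat := if o is Some (i, j) then minn j (m - i) else 0.
Let deg3 (o : J) : nat := if o is Some (i, _) then i else 0.

Lemma one_sub_linear_form_expansion :
  exists (J : finType) (w : J -> R) (e1 e2 e3 : J -> nat),
    (forall j, e1 j + e2 j + e3 j <= m)%N /\
    forall s t u, 1 - (a * s + b * t + c * u) ^+ m =
      \sum_j w j * s ^+ e1 j * t ^+ e2 j * u ^+ e3 j.
Proof.
exists J, weight, deg1, deg2, deg3; split.
  by case=> [[i j]|] //=; have := ltn_ord i; have := ltn_ord j; lia.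
move=> s t u; rewrite sum_option /= !expr0 !mulr1 exprDn; congr (_ + _).
have pair_sum (H : 'I_m.+1 * 'I_m.+1 -> R) : \sum_p H p = \sum_i \sum_j H (i, j).
  by rewrite pair_bigA; apply: eq_bigr => -[].
rewrite pair_sum -sumrN; apply: eq_bigr => i _.
rewrite exprDn (big_ord_widen m.+1 (fun j => ((a * s) ^+ (m - i - j) * (b * t) ^+ j)
  *+ 'C(m - i, j))) ?ltnS ?leq_subr // big_mkcond /= mulr_suml -sumrMnl -sumrN.
apply: eq_bigr => j _; rewrite ltnS; case: ifP => [j_le|_]; last first.
  by rewrite mul0r mul0rn oppr0 !mul0r.
rewrite (minn_idPl j_le) !exprMn !mulrnA -!mulNrn.
move: (a ^+ _) (b ^+ _) (c ^+ _) (s ^+ _) (t ^+ _) (u ^+ _) ('C(m, i)) ('C(m - i, j)).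
by move=> *; ring.
Qed.
End LinearFormPower.

Definition low_degree_exponents m n : {set {ffun 'I_n -> 'I_m.+1}} :=
  [set al : {ffun 'I_n -> 'I_m.+1} | 3 * \sum_(l < n) al l <= n * m].

Section CommSemiRingSums.
Variable R : comPzSemiRingType.
Local Open Scope ring_scope.

Lemma row_eq0_indicator n (v : 'rV[R]_n) :
  (v == 0)%:R = \prod_l (v 0 l == 0)%:R :> R.
Proof.
have [->|/eqP v_nz] := eqVneq v 0; first by rewrite big1 // => l _; rewrite mxE eqxx.
have [l vl_nz] : exists l, v 0 l != 0.
  apply/existsP; rewrite -negb_forall; apply: contra_notN v_nz => /forallP v0.
  by apply/rowP => l; rewrite mxE; apply/eqP.
by rewrite (bigD1 l) //= (negPf vl_nz) mul0r.
Qed.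

Lemma sum_mul_partition (I J : finType) (P : pred I) (p : I -> J)
    (Q : pred J) (A : J -> R) (B : I -> R) :
  (forall i, P i -> Q (p i)) ->
  \sum_(i | P i) A (p i) * B i = \sum_(j | Q j) A j * \sum_(i | P i && (p i == j)) B i.
Proof.
move=> PQ; rewrite (partition_big p Q) //; apply: eq_bigr => j _.
by rewrite mulr_sumr; apply: eq_bigr => i /andP[_ /eqP ->].
Qed.
End CommSemiRingSums.

Section CapBound.
Variables (F : fieldType) (m : nat) (J : finType) (w : J -> F) (e1 e2 e3 : J -> nat).
Variables a b c : F.
Hypothesis deg_le : forall j, (e1 j + e2 j + e3 j <= m)%N.
Hypothesis indicator_expansion : forall s t u : F,
  ((a * s + b * t + c * u == 0)%:R = \sum_j w j * s ^+ e1 j * t ^+ e2 j * u ^+ e3 j)%R.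
Local Open Scope ring_scope.

Definition monomial n k (al : {ffun 'I_n -> 'I_k}) (x : 'rV[F]_n) : F :=
  \prod_l x 0 l ^+ al l.

Let deg_lt j : [/\ e1 j < m.+1, e2 j < m.+1 & e3 j < m.+1]%N.
Proof. by have := deg_le j; split; lia. Qed.

Let exponents n (e : J -> nat) (f : {ffun 'I_n -> J}) : {ffun 'I_n -> 'I_m.+1} :=
  [ffun l => inord (e (f l))].

Lemma indicator_vector_expansion n (x y z : 'rV[F]_n) :
  (a *: x + b *: y + c *: z == 0)%:R =
  \sum_(f : {ffun 'I_n -> J}) (\prod_l w (f l)) * monomial (exponents e1 f) x
    * monomial (exponents e2 f) y * monomial (exponents e3 f) z.
Proof.
rewrite row_eq0_indicator; under eq_bigr do rewrite !mxE indicator_expansion.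
rewrite bigA_distr_bigA; apply: eq_bigr => f _; rewrite -!big_split /=.
apply: eq_bigr => l _; have [? ? ?] := deg_lt (f l).
by rewrite !ffunE !inordK.
Qed.

Lemma exponents_low_degree n (f : {ffun 'I_n -> J}) :
  exponents e1 f \notin low_degree_exponents m n ->
  exponents e2 f \notin low_degree_exponents m n ->
  exponents e3 f \in low_degree_exponents m n.
Proof.
rewrite !inE -!ltnNge.
have : (\sum_l (exponents e1 f l + exponents e2 f l + exponents e3 f l) <= \sum_(l < n) m)%N.
  apply: leq_sum => l _; have [? ? ?] := deg_lt (f l).
  by rewrite !ffunE !inordK.
rewrite !big_split /= sum_nat_const card_ord; lia.
Qed.

Lemma trivial_solutions_card_le s n (v : 'I_s -> 'rV[F]_n) :
  (forall i j k, (a *: v i + b *: v j + c *: v k == 0) = (i == j) && (j == k)) ->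
  (s <= 3 * #|low_degree_exponents m n|)%N.
Proof.
move=> only_trivial; set K := low_degree_exponents m n.
pose W (f : {ffun 'I_n -> J}) := \prod_l w (f l).
pose E1 (f : {ffun 'I_n -> J}) := exponents e1 f.
pose E2 (f : {ffun 'I_n -> J}) := exponents e2 f.
pose E3 (f : {ffun 'I_n -> J}) := exponents e3 f.
pose P1 f := E1 f \in K; pose P2 f := ~~ P1 f && (E2 f \in K).
pose P3 f := ~~ P1 f && ~~ (E2 f \in K).
pose mon (p : {ffun 'I_n -> 'I_m.+1}) i := monomial p (v i).
suff : (s <= #|K| + #|K| + #|K|)%N by lia.
apply: (@diagonal_slice_rank F s _ (mem K) (mem K) (mem K) mon mon mon
  (fun p j k => \sum_(f | P1 f && (E1 f == p)) W f * mon (E2 f) j * mon (E3 f) k)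
  (fun p i k => \sum_(f | P2 f && (E2 f == p)) W f * mon (E1 f) i * mon (E3 f) k)
  (fun p i j => \sum_(f | P3 f && (E3 f == p)) W f * mon (E1 f) i * mon (E2 f) j)).
move=> i j k; rewrite -only_trivial indicator_vector_expansion.
rewrite (bigID P1) /= [X in _ + X](bigID (fun f => E2 f \in K)) /= -!addrA.
congr (_ + (_ + _)).
- rewrite -(sum_mul_partition (mon^~ i)) //.
  by apply: eq_bigr => f _; rewrite /W /mon; ring.
- rewrite -(sum_mul_partition (mon^~ j) (P := P2)); last by move=> f /andP[].
  by apply: eq_bigr => f _; rewrite /W /mon; ring.
- rewrite -(sum_mul_partition (mon^~ k) (P := P3)); last first.
    by move=> f /andP[]; apply: exponents_low_degree.
  by apply: eq_bigr => f _; rewrite /W /mon; ring.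
Qed.
End CapBound.

Section FiniteField.
Variable F : finFieldType.
Local Open Scope ring_scope.

Lemma card_finField_gt1 : (1 < #|F|)%N.
Proof. by rewrite (cardD1 0) (cardD1 1) !inE oner_neq0. Qed.

Lemma eq0_indicator (u : F) : (u == 0)%:R = 1 - u ^+ #|F|.-1.
Proof.
have [->|u_nz] := eqVneq u 0.
  by rewrite expr0n -(subnKC card_finField_gt1) subr0.
apply/esym/eqP; rewrite subr_eq0 eq_sym -(inj_eq (mulIf u_nz)) mul1r -exprSr.
by rewrite prednK ?expf_card // ltnW // card_finField_gt1.
Qed.

Lemma linear_eq_indicator_expansion (a b c : F) :
  exists (J : finType) (w : J -> F) (e1 e2 e3 : J -> nat),
    (forall j, e1 j + e2 j + e3 j <= #|F|.-1)%N /\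
    forall s t u, (a * s + b * t + c * u == 0)%:R =
      \sum_j w j * s ^+ e1 j * t ^+ e2 j * u ^+ e3 j.
Proof.
have [J [w [e1 [e2 [e3 [deg_le expand]]]]]] := one_sub_linear_form_expansion a b c #|F|.-1.
by exists J, w, e1, e2, e3; split=> // s t u; rewrite eq0_indicator expand.
Qed.

Lemma card_trivial_solution_set n (a b c : F) (I : {set 'rV[F]_n}) :
  a + b + c = 0 ->
  {in I & I & I, forall x y z, a *: x + b *: y + c *: z = 0 -> x = y /\ y = z} ->
  (#|I| <= 3 * #|low_degree_exponents #|F|.-1 n|)%N.
Proof.
move=> abc0 only_trivial.
have [J [w [e1 [e2 [e3 [deg_le expand]]]]]] := linear_eq_indicator_expansion a b c.
apply: (trivial_solutions_card_le deg_le expand (v := @enum_val _ (mem I))) => i j k.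
apply/eqP/andP => [sol|[/eqP-> /eqP->]]; last by rewrite -!scalerDl abc0 scale0r.
have [/enum_val_inj-> /enum_val_inj->] :=
  only_trivial _ _ _ (enum_valP i) (enum_valP j) (enum_valP k) sol.
by rewrite eqxx.
Qed.
End FiniteField.

Lemma card_few_solutions_le (F : finFieldType) n (A B : {set 'rV[F]_n}) (a b c : F) d :
  admissible a b c -> B \subset A -> (forall x, x \in B -> nsol A a b c x <= d) ->
  #|B| <= (2 * d).+1 * (3 * #|low_degree_exponents #|F|.-1 n|).
Proof.
case/and4P=> _ _ c_nz /eqP abc0 BA few_sol.
pose sol x := [set p : 'rV[F]_n * 'rV[F]_n |
  [&& p.1 \in A, p.2 \in A & (a *: x + b *: p.1 + c *: p.2 == 0)%R]].
pose N x := [set p.1 | p in sol x].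
have out_deg x : x \in B -> #|[set y in B | y \in N x]| <= d.
  move=> Bx; apply: leq_trans (leq_trans (leq_imset_card fst (sol x)) (few_sol x Bx)).
  by apply/subset_leq_card/subsetP => y; rewrite inE => /andP[].
have [I IB [I_indep card_B]] := independent_subset out_deg.
apply: leq_trans card_B _; rewrite leq_mul2l; apply/orP; right.
apply: (card_trivial_solution_set abc0) => x y z Ix Iy Iz xyz0.
have [Ax Ay Az] : [/\ x \in A, y \in A & z \in A].
  by split; apply: (subsetP BA); apply: (subsetP IB).
have yx : y = x.
  by apply: I_indep => //; apply/imsetP; exists (y, z); rewrite // inE Ay Az xyz0 eqxx.
have c_eq : c = (- (a + b))%R by apply/eqP; rewrite -addr_eq0 addrC abc0.
rewrite yx; split=> //; apply/esym/(scalerI c_nz)/eqP.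
by move/eqP: xyz0; rewrite yx -scalerDl [(_ + c *: z)%R]addrC addr_eq0 -scaleNr -c_eq.
Qed.

Section LowDegreeGrowth.
Variable R : realFieldType.
Local Open Scope ring_scope.

Lemma card_low_degree_exponents_le m n (tau : R) : 0 <= tau <= 1 ->
  #|low_degree_exponents m n|%:R * tau ^+ (n * m) <= (\sum_(i < m.+1) tau ^+ (3 * i)) ^+ n.
Proof.
case/andP=> tau_ge0 tau_le1; rewrite mulr_natl -sumr_const.
apply: le_trans (_ : \sum_(al in low_degree_exponents m n) tau ^+ (3 * \sum_l al l)%N <= _).
  by apply: ler_sum => al; rewrite inE => low_al; apply: ler_wiXn2l.
apply: le_trans (_ : \sum_(al : {ffun 'I_n -> 'I_m.+1}) tau ^+ (3 * \sum_l al l)%N <= _).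
  rewrite [X in _ <= X](bigID (mem (low_degree_exponents m n))) /= lerDl.
  by apply: sumr_ge0 => al _; apply: exprn_ge0.
have -> : forall x : R, x ^+ n = \prod_(l < n) x by move=> x; rewrite prodr_const card_ord.
by rewrite bigA_distr_bigA; apply: ler_sum => al _; rewrite prodrXr big_distrr.
Qed.

Lemma one_sub_pow_le (s : R) k : 0 <= s <= 1 ->
  (1 - s) ^+ k <= 1 - k%:R * s + k%:R ^+ 2 * s ^+ 2 / 2.
Proof.
case/andP=> s_ge0 s_le1; elim: k => [|k IH]; first by rewrite mul0r expr2 !mul0r; lra.
rewrite exprS -natr1; apply: le_trans (ler_wpM2l _ IH) _; first lra.
have : 0 <= s ^+ 2 * (1 + k%:R ^+ 2 * s).
  by rewrite mulr_ge0 ?sqr_ge0 // addr_ge0 // mulr_ge0 ?sqr_ge0.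
lra.
Qed.

Lemma one_sub_pow_ge (s : R) k : 0 <= s <= 1 -> 1 - k%:R * s <= (1 - s) ^+ k.
Proof.
case/andP=> s_ge0 s_le1; elim: k => [|k IH]; first by rewrite mul0r subr0.
rewrite exprS -natr1; apply: le_trans (ler_wpM2l _ IH); last lra.
have : 0 <= k%:R * s * s by rewrite !mulr_ge0.
lra.
Qed.

Lemma sum_second_order_bounds (s : R) m :
  \sum_(i < m.+1) (1 - (3 * i)%N%:R * s + (3 * i)%N%:R ^+ 2 * s ^+ 2 / 2) =
  m.+1%:R * (1 - 3 / 2 * (s * m%:R) + 3 / 4 * (s * m%:R) * (2 * (s * m%:R) + s)).
Proof.
elim: m => [|m IH]; first by rewrite big_ord1 /= mul0r expr0n /=; field.
by rewrite big_ord_recr /= IH !natrM -(@natr1 R m.+1) -(@natr1 R m); field.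
Qed.

(* With s = 1/(9m): the second-order bounds sum to at most (31/36)(m+1), while
   Bernoulli gives (1 - s)^m >= 8/9 = 32/36. *)
Lemma sum_pow_mul3_lt m : (0 < m)%N ->
  \sum_(i < m.+1) (1 - (9 * m%:R)^-1) ^+ (3 * i) < m.+1%:R * (1 - (9 * m%:R)^-1) ^+ m :> R.
Proof.
move=> m_gt0; have m_ge1 : 1 <= m%:R :> R by rewrite ler1n.
set s : R := (9 * m%:R)^-1.
have s_gt0 : 0 < s by rewrite invr_gt0; lra.
have sm : s * m%:R = 1 / 9 by rewrite /s; field; rewrite pnatr_eq0 -lt0n.
have s_le : s <= 1 / 9 by rewrite -sm ler_peMr // ltW.
have s01 : 0 <= s <= 1 by apply/andP; split; lra.
have pow_m : 8 / 9 <= (1 - s) ^+ m.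
  by apply: le_trans (one_sub_pow_ge m s01); rewrite [_ * s]mulrC sm; lra.
have sum_le : \sum_(i < m.+1) (1 - s) ^+ (3 * i) <= m.+1%:R * (31 / 36).
  apply: le_trans (_ : _ <= \sum_(i < m.+1) (1 - (3 * i)%N%:R * s
    + (3 * i)%N%:R ^+ 2 * s ^+ 2 / 2)) _.
    by apply: ler_sum => i _; apply: one_sub_pow_le.
  by rewrite sum_second_order_bounds sm ler_wpM2l //; lra.
apply: le_lt_trans sum_le _; rewrite ltr_pM2l ?ltr0Sn //; lra.
Qed.

Lemma low_degree_exponents_growth m : (0 < m)%N ->
  exists2 G : R, 1 <= G < m.+1%:R &
    forall n, #|low_degree_exponents m n|%:R <= G ^+ n.
Proof.
move=> m_gt0; set tau : R := 1 - (9 * m%:R)^-1.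
have m_ge1 : 1 <= m%:R :> R by rewrite ler1n.
have inv_lt1 : (9 * m%:R)^-1 < 1 :> R by rewrite invf_lt1; lra.
have tau_gt0 : 0 < tau by rewrite /tau; lra.
have tau_le1 : tau <= 1 by rewrite /tau lerBlDr lerDl invr_ge0 mulr_ge0.
have taum_gt0 : 0 < tau ^+ m := exprn_gt0 _ tau_gt0.
pose P := \sum_(i < m.+1) tau ^+ (3 * i).
have P_ge1 : 1 <= P.
  by rewrite /P big_ord_recl /= muln0 expr0 lerDl sumr_ge0 // => i _; rewrite exprn_ge0 ?ltW.
exists (P / tau ^+ m).
  rewrite ler_pdivlMr // mul1r ltr_pdivrMr // sum_pow_mul3_lt // andbT.
  by apply: le_trans P_ge1; apply: exprn_ile1 => //; apply: ltW.
move=> n; rewrite expr_div_n -exprM mulnC ler_pdivlMr ?exprn_gt0 //.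
by apply: card_low_degree_exponents_le; rewrite tau_le1 ltW.
Qed.
End LowDegreeGrowth.

Open Scope R_scope.

Lemma ln_ge0 x : 1 <= x -> 0 <= ln x.
Proof.
case/Rle_lt_or_eq_dec=> [x_gt1|<-]; last by rewrite ln_1; apply: Rle_refl.
by rewrite -ln_1; apply/Rlt_le/ln_increasing => //; Lra.lra.
Qed.

(* Take ln c halfway between ln G and ln q and eps with eps ln c a quarter of
   ln q - ln G; then X > c^n gives
   ln (delta X) - ln (X^eps G^n) > ln delta + n (ln q - ln G) / 4. *)
Lemma exponent_gap (G q : R) : 1 <= G -> G < q ->
  exists eps c, 0 < eps /\ 0 < c /\ c < q /\
  forall delta, 0 < delta -> exists N : nat, forall n, (N <= n)%N ->
  forall X, c ^ n < X -> 9 * Rpower X eps * G ^ n <= delta * X.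
Proof.
move=> G_ge1 G_lt_q; have G_gt0 : 0 < G by Lra.lra.
have lnG_ge0 := ln_ge0 G_ge1.
have lnG_lt : ln G < ln q := ln_increasing _ _ G_gt0 G_lt_q.
pose gamma := (ln G + ln q) / 2; pose gap := (ln q - ln G) / 4.
have gamma_gt0 : 0 < gamma by rewrite /gamma; Lra.lra.
pose eps := gap / gamma.
have eps_gamma : eps * gamma = gap.
  by rewrite /eps /Rdiv Rmult_assoc Rinv_l ?Rmult_1_r //; apply: Rgt_not_eq.
have eps_gt0 : 0 < eps by apply: Rdiv_lt_0_compat; rewrite /gap; Lra.lra.
have eps_lt1 : eps < 1.
  by apply: (Rmult_lt_reg_r gamma) => //; rewrite eps_gamma /gap /gamma; Lra.lra.
exists eps, (exp gamma); split; [|split; [exact: exp_pos|split]] => //.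
  rewrite -[q]exp_ln; last by Lra.lra.
  by apply: exp_increasing; rewrite /gamma; Lra.lra.
move=> delta delta_gt0.
have [N N_gap] : exists N, INR N * gap > ln 9 - ln delta.
  by apply: INR_archimed; rewrite /gap; Lra.lra.
exists N => n le_Nn X X_gt.
have X_gt0 : 0 < X by apply: Rlt_trans X_gt; apply: pow_lt; apply: exp_pos.
have lnX_gt : INR n * gamma < ln X.
  rewrite -[gamma]ln_exp -ln_pow; last exact: exp_pos.
  by apply: ln_increasing X_gt; apply: pow_lt; apply: exp_pos.
have n_gap : INR N * gap <= INR n * gap.
  by apply: Rmult_le_compat_r; [rewrite /gap; Lra.lra | apply/le_INR/ssrnat.leP].
have pos9 : 0 < 9 by Lra.lra.
have powX_gt0 : 0 < Rpower X eps := exp_pos _.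
have powG_gt0 : 0 < G ^ n := pow_lt _ _ G_gt0.
have pos9X : 0 < 9 * Rpower X eps := Rmult_lt_0_compat _ _ pos9 powX_gt0.
apply/Rlt_le/ln_lt_inv; try exact: Rmult_lt_0_compat.
rewrite !ln_mult ?ln_Rpower ?ln_pow //.
have : (1 - eps) * (INR n * gamma) < (1 - eps) * ln X by apply: Rmult_lt_compat_l => //; Lra.lra.
have : INR n * gamma = INR n * ln G + 2 * (INR n * gap) by rewrite /gamma /gap; Lra.lra.
have : eps * (INR n * gamma) = INR n * gap by rewrite -eps_gamma; Lra.lra.
Lra.lra.
Qed.

Lemma finField_low_degree_growth (F : finFieldType) :
  exists2 G : R, 1 <= G /\ G < INR #|F| &
    forall n, INR #|low_degree_exponents #|F|.-1 n| <= G ^ n.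
Proof.
have m_gt0 : (0 < #|F|.-1)%N by have := card_finField_gt1 F; lia.
have [G /andP[/RleP G_ge1 G_lt] grow] := low_degree_exponents_growth R m_gt0.
exists G; first by split=> //; rewrite INRE -(prednK (ltnW (card_finField_gt1 F))); apply/RltP.
by move=> n; rewrite INRE RpowE; apply/RleP.
Qed.

Lemma nsol_lt_notin_Aeps (F : finFieldType) n (A : {set 'rV[F]_n}) a b c eps x :
  x \in A :\: Aeps A a b c eps -> INR (nsol A a b c x) < Rpower (INR #|A|) eps.
Proof.
case/setDP=> Ax; rewrite inE Ax /=; case: Rle_dec => // not_le _.
exact: Rnot_le_lt.
Qed.

Lemma card_sparse_part_le (F : finFieldType) n (A : {set 'rV[F]_n}) a b c (G eps : R) :
  admissible a b c -> 0 <= eps ->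
  INR #|low_degree_exponents #|F|.-1 n| <= G ^ n ->
  INR #|A :\: Aeps A a b c eps| <= 9 * Rpower (INR #|A|) eps * G ^ n.
Proof.
move=> adm eps_ge0 K_le; set B := A :\: Aeps A a b c eps; set L := Rpower (INR #|A|) eps.
have L_gt0 : 0 < L := exp_pos _.
have Gn_ge0 : 0 <= G ^ n by apply: Rle_trans K_le; apply: pos_INR.
have [B0|/set0Pn[x0 Bx0]] := eqVneq B set0.
  by rewrite B0 cards0 /=; apply/Rmult_le_pos/Gn_ge0; Lra.lra.
have BA : B \subset A by apply: subsetDl.
have card_B := card_few_solutions_le adm BA (fun x Bx => leq_bigmax_cond _ Bx).
set d := \max_(x in B) _ in card_B.
have d_lt : INR d < L.
  have B_gt0 : (0 < #|B|)%N by apply/card_gt0P; exists x0.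
  by rewrite /d; have [x Bx ->] := eq_bigmax_cond (nsol A a b c) B_gt0; apply: nsol_lt_notin_Aeps.
have L_ge1 : 1 <= L.
  have A_ge1 : 1 <= INR #|A|.
    by apply: (le_INR 1); apply/ssrnat.leP/card_gt0P; exists x0; apply: (subsetP BA).
  by rewrite -(Rpower_O (INR #|A|)); [apply: Rle_Rpower | Lra.lra].
have d_bound : 2 * INR d + 1 <= 3 * L by Lra.lra.
have K_bound : 3 * INR #|low_degree_exponents #|F|.-1 n| <= 3 * G ^ n.
  by apply: Rmult_le_compat_l K_le; Lra.lra.
have card_B_R : INR #|B| <= (2 * INR d + 1) * (3 * INR #|low_degree_exponents #|F|.-1 n|).
  by have := le_INR _ _ (ssrnat.leP card_B); rewrite !mult_INR S_INR mult_INR /=; Lra.lra.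
apply: Rle_trans card_B_R (Rle_trans _ _ _ (Rmult_le_compat _ _ _ _ _ _ d_bound K_bound) _).
- by have := pos_INR d; Lra.lra.
- by have := pos_INR #|low_degree_exponents #|F|.-1 n|; Lra.lra.
- by Lra.lra.
Qed.

Theorem theorem1 (F : finFieldType) :
  exists (eps cq : R), 0 < eps /\ 0 < cq /\ cq < INR #|F| /\
  forall delta : R, 0 < delta ->
  exists N : nat, forall n : nat, (N <= n)%N ->
  forall A : {set 'rV[F]_n}, cq ^ n < INR #|A| ->
  forall a b c : F, admissible a b c ->
  (1 - delta) * INR #|A| <= INR #|Aeps A a b c eps|.
Proof.
have [G [G_ge1 G_lt] growth] := finField_low_degree_growth F.
have [eps [cq [eps_gt0 [cq_gt0 [cq_lt large_sets]]]]] := exponent_gap G_ge1 G_lt.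
exists eps, cq; do 3!split=> //.
move=> delta delta_gt0; have [N N_large] := large_sets delta delta_gt0.
exists N => n le_Nn A A_large a b c adm.
have sparse := card_sparse_part_le A adm (Rlt_le _ _ eps_gt0) (growth n).
have dense := N_large n le_Nn _ A_large.
have card_A : INR #|A| = INR #|Aeps A a b c eps| + INR #|A :\: Aeps A a b c eps|.
  have Aeps_sub : Aeps A a b c eps \subset A by apply/subsetP => x; rewrite inE => /andP[].
  by rewrite -plus_INR -(cardsID (Aeps A a b c eps) A) (setIidPr Aeps_sub).
Lra.lra.
Qed.
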